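(* Let $N\ge1$ and $T_{\rm poll}\ge 1$ be integers, and let $\tau^1,\dots,\tau^N$ be i.i.d. geometric random variables with parameter $p$, i.e. $\mathbb P(\tau^j>t)=(1-p)^t$ for all $t\in\mathbb N\cup\{0\}$. Define $$M=\min\{m\ge 1:\ \exists\, j\in\{1,\dots,N\}\text{ such that }\tau^j\le mT_{\rm poll}\},\qquad K=\min\{j\in\{1,\dots,N\}:\ \tau^j\le MT_{\rm poll}\},$$ $$\xi=(N-1)(M-1)T_{\rm poll}+(K-1)T_{\rm poll}+\tau^K.$$ Then $\xi$ has the same law as $\tau^1$. *)

From HB Require Import structures.
From mathcomp Require Import all_boot all_order all_algebra.
From mathcomp Require Import all_classical all_reals all_analysis.
Set Implicit Arguments. Unset Strict Implicit. Unset Printing Implicit Defensive.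
Import Order.TTheory GRing.Theory Num.Theory.
Local Open Scope classical_set_scope.
Local Open Scope ring_scope.

(* least n such that P n (0 if no such n exists) *)
Definition least (P : pred nat) : nat :=
  match pselect (exists n, P n) with
  | left h => ex_minn h
  | right _ => 0%N
  end.

(* x j = tau^j (values for j in 1..N are relevant) *)
Definition Mpoll (N Tpoll : nat) (x : nat -> nat) : nat :=
  least (fun m => (1 <= m)%N && [exists j : 'I_N, x j.+1 <= m * Tpoll]%N).

Definition Kpoll (N Tpoll : nat) (x : nat -> nat) : nat :=
  least (fun j => (1 <= j <= N)%N && (x j <= Mpoll N Tpoll x * Tpoll)%N).

Definition xi (N Tpoll : nat) (x : nat -> nat) : nat :=
  ((N - 1) * (Mpoll N Tpoll x - 1) * Tpoll
   + (Kpoll N Tpoll x - 1) * Tpoll + x (Kpoll N Tpoll x))%N.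

(* mutual independence of tau^1, ..., tau^N (nat-valued; every subset of nat
   is measurable for the discrete sigma-algebra): product rule for all
   families of events {tau^j \in A_j}; taking A_j = setT recovers every
   finite subfamily. *)
Definition mutually_independent d (Omega : measurableType d) (R : realType)
  (P : probability Omega R) (N : nat) (tau : nat -> Omega -> nat) : Prop :=
  forall A : nat -> set nat,
    P [set w | forall j, (1 <= j <= N)%N -> A j (tau j w)]
    = (\prod_(1 <= j < N.+1) P (tau j @^-1` A j))%E.

From HB Require Import structures.
From mathcomp Require Import all_boot all_order all_algebra.
From mathcomp Require Import all_classical all_reals all_analysis.
From mathcomp Require Import zify ring.
Import Order.TTheory GRing.Theory Num.Theory.
Local Open Scope classical_set_scope.
Local Open Scope ring_scope.
Set Implicit Arguments. Unset Strict Implicit.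

(* Write s = (N a + b) T + c with b < N and c < T.  When every clock is
   positive, xi = s + 1 holds exactly when clocks 1, ..., b exceed (a + 1) T,
   clock b + 1 equals a T + c + 1 and clocks b + 2, ..., N exceed a T (then
   M = a + 1 and K = b + 1).  By independence and the geometric tails this
   event has probability
     q^((a+1) T b) * q^(a T + c) p * q^(a T (N - b - 1)) = q^s p = P(tau^1 = s + 1),
   with q = 1 - p, while xi = 0 and tau^1 = 0 are both null events. *)

Lemma leastP (Q : pred nat) : (exists n, Q n) ->
  Q (least Q) /\ forall n, Q n -> (least Q <= n)%N.
Proof. by rewrite /least; case: pselect => // h _; case: ex_minnP. Qed.

Section mixed_radix.
Local Open Scope nat_scope.
Variables (N T : nat).

Lemma mixed_radix_decomp s : 0 < N -> 0 < T ->
  exists a b c, [/\ b < N, c < T & s = (N * a + b) * T + c].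
Proof.
move=> N_gt0 T_gt0; exists (s %/ T %/ N), (s %/ T %% N), (s %% T).
split; [exact: ltn_pmod | exact: ltn_pmod |].
by rewrite {1}(divn_eq s T) {1}(divn_eq (s %/ T) N) (mulnC N).
Qed.

Lemma mixed_radix_inj a b c a' b' c' : b < N -> c < T -> b' < N -> c' < T ->
  (N * a + b) * T + c = (N * a' + b') * T + c' -> [/\ a = a', b = b' & c = c'].
Proof.
move=> bN cT b'N c'T E.
have /(congr1 (divn^~ T)) := E; have /(congr1 (modn^~ T)) := E.
rewrite /= !modnMDl !divnMDl ?(leq_ltn_trans _ cT) // !modn_small // !divn_small //.
rewrite !addn0 => -> E'; have := congr1 (divn^~ N) E'; have := congr1 (modn^~ N) E'.
rewrite /= ![N * _]mulnC !modnMDl !divnMDl ?(leq_ltn_trans _ bN) //.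
by rewrite !modn_small // !divn_small // !addn0.
Qed.

End mixed_radix.

Section polling.
Local Open Scope nat_scope.
Variables (N T : nat) (x : nat -> nat).
Hypotheses (N_gt0 : 0 < N) (T_gt0 : 0 < T).

Lemma Mpoll_spec :
  [/\ 1 <= Mpoll N T x, exists2 j, 1 <= j <= N & x j <= Mpoll N T x * T
    & forall m j, 1 <= m -> 1 <= j <= N -> x j <= m * T -> Mpoll N T x <= m].
Proof.
have ex : exists m, (1 <= m) && [exists j : 'I_N, x j.+1 <= m * T].
  exists (x 1).+1; apply/andP; split => //; apply/existsP.
  by exists (Ordinal N_gt0) => /=; nia.
have [/andP [M_ge1 /existsP [j hj]] M_min] := leastP ex.
rewrite /Mpoll; split => //; first by exists j.+1 => //; rewrite ltn_ord.
move=> m i m_ge1 /andP [i_ge1 iN] hi; apply: M_min; rewrite m_ge1 /=.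
apply/existsP; have iN' : i.-1 < N by lia.
by exists (Ordinal iN') => /=; rewrite prednK.
Qed.

Lemma Kpoll_spec :
  [/\ 1 <= Kpoll N T x <= N, x (Kpoll N T x) <= Mpoll N T x * T
    & forall j, 1 <= j <= N -> x j <= Mpoll N T x * T -> Kpoll N T x <= j].
Proof.
have [_ [j hj xj] _] := Mpoll_spec.
have ex : exists j, (1 <= j <= N) && (x j <= Mpoll N T x * T).
  by exists j; rewrite hj xj.
have [/andP [K_range xK] K_min] := leastP ex.
by rewrite /Kpoll; split => // i hi xi; apply: K_min; rewrite hi xi.
Qed.

Lemma eq_xi y : (forall j, 1 <= j <= N -> x j = y j) -> xi N T x = xi N T y.
Proof.
move=> xy.
have eM : Mpoll N T x = Mpoll N T y.
  rewrite /Mpoll; congr least; apply: funext => m; congr (_ && _).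
  by apply: eq_existsb => j; rewrite xy // ltn_ord.
have eK : Kpoll N T x = Kpoll N T y.
  rewrite /Kpoll; congr least; apply: funext => j.
  by case: (boolP (1 <= j <= N)) => //= hj; rewrite xy // eM.
have [K_range _ _] := Kpoll_spec.
by rewrite /xi eM eK xy // -eK.
Qed.

Lemma xi_gt0 : (forall j, 1 <= j <= N -> 0 < x j) -> 0 < xi N T x.
Proof.
move=> x_gt0; have [K_range _ _] := Kpoll_spec.
exact: leq_trans (x_gt0 _ K_range) (leq_addl _ _).
Qed.

(* The values of clock j compatible with xi = (N a + b) T + c + 1. *)
Definition xi_window (a b c j : nat) : set nat :=
  if j <= b then [set t | a.+1 * T < t]
  else if j == b.+1 then [set a * T + c.+1] else [set t | a * T < t].

Lemma xi_windowP a b c j t : xi_window a b c j t <->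
  [/\ j <= b -> a.+1 * T < t, j = b.+1 -> t = a * T + c.+1 & b.+1 < j -> a * T < t].
Proof.
rewrite /xi_window; case: ifP => jb; last case: eqP => jb1 /=.
- by split => [h|[h _ _]]; [split => // *; lia | exact: h].
- by split => [h|[_ h _]]; [split => // *; lia | exact: h].
- by split => [h|[_ _ h]]; [split => // *; lia | apply: h; lia].
Qed.

Lemma xi_windows_xi a b c : b < N -> c < T ->
  (forall j, 1 <= j <= N -> xi_window a b c j (x j)) ->
  xi N T x = (N * a + b) * T + c.+1.
Proof.
move=> bN cT win.
have xK : x b.+1 = a * T + c.+1 by case/xi_windowP: (win b.+1 ltac:(lia)) => _ -> //.
have low j : 1 <= j <= N -> a * T < x j.
  move=> hj; case/xi_windowP: (win j hj) => h1 h2 h3.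
  by case: (ltngtP j b.+1) => [/ltnSE/h1|/h3|/h2->]; nia.
have [_ [j hj xj] M_min] := Mpoll_spec.
have eM : Mpoll N T x = a.+1.
  apply/eqP; rewrite eqn_leq (M_min _ b.+1) //=; last by rewrite xK; nia.
  have := leq_trans (low j hj) xj; rewrite ltn_mul2r; by case/andP.
have [K_range xK' K_min] := Kpoll_spec.
have eK : Kpoll N T x = b.+1.
  apply/eqP; rewrite eqn_leq K_min /=; [|lia|by rewrite xK eM; nia].
  rewrite ltnNge; apply/negP => Kb.
  by case/xi_windowP: (win _ K_range) => /(_ Kb); rewrite -eM; lia.
by rewrite /xi eM eK xK; nia.
Qed.

Lemma xi_xi_windows a b c : (forall j, 1 <= j <= N -> 0 < x j) -> b < N -> c < T ->
  xi N T x = (N * a + b) * T + c.+1 ->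
  forall j, 1 <= j <= N -> xi_window a b c j (x j).
Proof.
move=> x_gt0 bN cT.
have [M_ge1 _ M_min] := Mpoll_spec; have [K_range xK K_min] := Kpoll_spec.
rewrite /xi; move: M_ge1 M_min K_range xK K_min.
set M := Mpoll N T x; set K := Kpoll N T x => M_ge1 M_min K_range xK K_min E.
have low j : 1 <= j <= N -> (M - 1) * T < x j.
  move=> hj; case: (ltngtP M 1) => hM; [lia| |by rewrite hM x_gt0].
  by rewrite ltnNge; apply/negP => /(M_min _ j _ hj); lia.
have high j : 1 <= j <= N -> j < K -> M * T < x j.
  by move=> hj jK; rewrite ltnNge; apply/negP => /(K_min j hj); lia.
have lowK := low K K_range.
have [eM eK ec] : [/\ a = M - 1, b = K - 1 & c = x K - (M - 1) * T - 1].
  by apply: (@mixed_radix_inj N T _ _ _ _ _ _ bN cT); [lia|nia|nia].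
move=> j hj; apply/xi_windowP; split => [jb|->|jb].
- have -> : a.+1 = M by lia.
  by apply: high => //; lia.
- have -> : b.+1 = K by lia.
  nia.
- by rewrite eM; apply: low.
Qed.

End polling.

Section measurable_family.
Context d (Omega : measurableType d) (N : nat) (tau : nat -> Omega -> nat).
Hypothesis mtau : forall j, (1 <= j <= N)%N -> measurable_fun setT (tau j).

Lemma measurable_tau_preimage j : (1 <= j <= N)%N -> forall A, measurable (tau j @^-1` A).
Proof. by move=> hj A; rewrite -[_ @^-1` _]setTI; apply: mtau. Qed.

Lemma measurable_family_event (A : nat -> set nat) :
  measurable [set w | forall j, (1 <= j <= N)%N -> A j (tau j w)].
Proof.
have -> : [set w | forall j, (1 <= j <= N)%N -> A j (tau j w)] =
    \bigcap_(j in [set j | (1 <= j <= N)%N]) tau j @^-1` A j.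
  by apply/seteqP; split => w /= H j; apply: H.
by apply: bigcap_measurableType => j hj; apply: measurable_tau_preimage.
Qed.

Lemma measurable_family_fun (Q : set (nat -> nat)) :
  (forall x y, (forall j, (1 <= j <= N)%N -> x j = y j) -> Q x -> Q y) ->
  measurable [set w | Q (fun j => tau j w)].
Proof.
(* Split along the countably many values of (tau 1, ..., tau N), listed as a seq. *)
move=> Q_ext; pose of_seq (s : seq nat) j := nth 0%N s j.-1.
have -> : [set w | Q (fun j => tau j w)] = \bigcup_(s : seq nat)
    ([set _ | Q (of_seq s)] `&` [set w | forall j, (1 <= j <= N)%N -> [set of_seq s j] (tau j w)]).
  apply/seteqP; split => w /=; last by case=> s _ [Qs ws]; apply: Q_ext Qs => j /ws.
  have tauE j : (1 <= j <= N)%N -> tau j w = of_seq [seq tau i w | i <- iota 1 N] j.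
    by move=> hj; rewrite /of_seq (nth_map 0%N) ?size_iota ?nth_iota; [congr tau|..]; lia.
  by move=> Qw; exists [seq tau i w | i <- iota 1 N] => //; split; [exact: (Q_ext _ _ tauE Qw)|].
apply: countable_bigcupT_measurable; first exact: countableP.
move=> s; apply: measurableI; last exact: (measurable_family_event (fun j => [set of_seq s j])).
have [Qs|nQs] := pselect (Q (of_seq s)); first by rewrite (propT Qs); exact: measurableT.
by rewrite (propF nQs); exact: measurable0.
Qed.

End measurable_family.

Section measure_lemmas.
Context d (Omega : measurableType d) (R : realType) (mu : {measure set Omega -> \bar R}).

Lemma measure_preimage_nat (f : Omega -> nat) A :
  (forall B, measurable (f @^-1` B)) ->
  mu (f @^-1` A) = (\sum_(0 <= s <oo | s \in A) mu (f @^-1` [set s]))%E.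
Proof.
move=> mf; have -> : f @^-1` A = \bigcup_(s in A) f @^-1` [set s].
  by apply/seteqP; split => w /=; [exists (f w) | case=> s As /= ->].
by rewrite measure_bigcup // => i j _ _ [w [/= <- <-]].
Qed.

Lemma measureI_null_compl A G : measurable A -> measurable G ->
  mu (~` G) = 0 -> mu (A `&` G) = mu A.
Proof.
move=> mA mG nG; have AG0 : mu (A `\` G) = 0.
  apply/eqP; rewrite eq_le measure_ge0 andbT -nG le_measure ?inE //.
    exact: measurableD.
  exact: measurableC.
by rewrite [RHS](measureDI mu mA mG) /= AG0 add0e.
Qed.

End measure_lemmas.

Section geometric.
Context d (Omega : measurableType d) (R : realType) (P : probability Omega R).
Variables (p : R) (f : Omega -> nat).
Hypotheses (mf : forall A, measurable (f @^-1` A))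
  (f_tail : forall t : nat, P [set w | (t < f w)%N] = ((1 - p) ^+ t)%:E).

Lemma geometric_pmf0 : P (f @^-1` [set 0%N]) = 0.
Proof.
have -> : f @^-1` [set 0%N] = ~` [set w | (0 < f w)%N].
  by apply/seteqP; split => w /=; case: (f w).
by rewrite probability_setC ?f_tail ?expr0 ?subee //; apply: (mf [set t | 0 < t]%N).
Qed.

Lemma geometric_pmfS s : P (f @^-1` [set s.+1]) = ((1 - p) ^+ s * p)%:E.
Proof.
have -> : f @^-1` [set s.+1] = [set w | (s < f w)%N] `\` [set w | (s.+1 < f w)%N].
  by apply/seteqP; split => w /=; lia.
rewrite measureD; [|exact: (mf [set t | s < t]%N)|exact: (mf [set t | s.+1 < t]%N)|].
  rewrite setIidr; last by move=> w /=; lia.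
  by rewrite /= !f_tail -EFinB exprS; congr EFin; ring.
by rewrite /= f_tail ltry.
Qed.

End geometric.

Section polling_law.
Context d (Omega : measurableType d) (R : realType) (P : probability Omega R).
Variables (N T : nat) (p : R) (tau : nat -> Omega -> nat).
Hypotheses (N_gt0 : (0 < N)%N) (T_gt0 : (0 < T)%N)
  (mtau : forall j, (1 <= j <= N)%N -> measurable_fun setT (tau j))
  (tau_indep : mutually_independent P N tau)
  (tau_tail : forall j, (1 <= j <= N)%N -> forall t : nat,
     P [set w | (t < tau j w)%N] = ((1 - p) ^+ t)%:E).

Local Notation xi_tau := (fun w => xi N T (fun j => tau j w)).
Local Notation clocks_positive := [set w | forall j, (1 <= j <= N)%N -> (0 < tau j w)%N].

Lemma measurable_xi_tau A : measurable (xi_tau @^-1` A).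
Proof.
apply: (measurable_family_fun mtau (Q := fun x => A (xi N T x))) => x y xy.
by rewrite (@eq_xi N T x N_gt0 T_gt0 y xy).
Qed.

Lemma measurable_clocks_positive : measurable clocks_positive.
Proof. exact: (measurable_family_event mtau (fun=> [set t | 0 < t]%N)). Qed.

Lemma clocks_positive_full : P (~` clocks_positive) = 0.
Proof.
rewrite probability_setC; last exact: measurable_clocks_positive.
rewrite (tau_indep (fun=> [set t | 0 < t]%N)) big_nat_cond big1 ?subee // => j /andP[hj _].
by have := tau_tail hj 0; rewrite expr0.
Qed.

Lemma xi_tau_pmf0 : P (xi_tau @^-1` [set 0%N]) = 0.
Proof.
apply/eqP; rewrite eq_le measure_ge0 andbT -clocks_positive_full le_measure ?inE //.
- exact: measurable_xi_tau.
- exact/measurableC/measurable_clocks_positive.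
- by move=> w /= xi0 pos; have := @xi_gt0 N T _ N_gt0 T_gt0 pos; rewrite xi0.
Qed.

Lemma prob_xi_windows a b c : (b < N)%N -> (c < T)%N ->
  P [set w | forall j, (1 <= j <= N)%N -> xi_window T a b c j (tau j w)]
  = ((1 - p) ^+ ((N * a + b) * T + c) * p)%:E.
Proof.
move=> bN cT; set q := 1 - p.
pose f j := if (j <= b)%N then q ^+ (a.+1 * T)
  else if j == b.+1 then q ^+ (a * T + c) * p else q ^+ (a * T).
rewrite (tau_indep (xi_window T a b c)).
have -> : (\prod_(1 <= j < N.+1) P (tau j @^-1` xi_window T a b c j))%E
    = (\prod_(1 <= j < N.+1) (f j)%:E)%E.
  apply: eq_big_nat => j; rewrite ltnS => hj.
  rewrite /xi_window /f; case: ifP => _; first exact: tau_tail.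
  case: ifP => _; last exact: tau_tail.
  by rewrite addnS (geometric_pmfS (measurable_tau_preimage mtau hj) (tau_tail hj)).
rewrite prodEFin; congr EFin.
rewrite (@big_cat_nat _ _ _ b.+1) //; last lia.
rewrite (@big_ltn _ _ _ b.+1 N.+1) /=; last lia.
have prod_before : \prod_(1 <= i < b.+1) f i = \prod_(1 <= i < b.+1) q ^+ (a.+1 * T).
  by apply: eq_big_nat => i /andP [_ hi]; rewrite /f ifT.
have prod_after : \prod_(b.+2 <= i < N.+1) f i = \prod_(b.+2 <= i < N.+1) q ^+ (a * T).
  by apply: eq_big_nat => i /andP [hi _]; rewrite /f !ifF //; apply/negbTE; lia.
rewrite prod_before prod_after !prodr_const_nat /f ltnn eqxx /= -!exprM.
have -> : ((N * a + b) * T + c = a.+1 * T * (b.+1 - 1) + (a * T + c) + a * T * (N.+1 - b.+2))%N.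
  nia.
rewrite !exprD; ring.
Qed.

Lemma xi_tau_pmfS s : P (xi_tau @^-1` [set s.+1]) = ((1 - p) ^+ s * p)%:E.
Proof.
have [a [b [c [bN cT ->]]]] := mixed_radix_decomp s N_gt0 T_gt0.
have mE := measurable_family_event mtau (xi_window T a b c).
have mG := measurable_clocks_positive.
rewrite -(prob_xi_windows a bN cT) -(measureI_null_compl mE mG clocks_positive_full).
rewrite -(measureI_null_compl (measurable_xi_tau _) mG clocks_positive_full).
congr (P _); apply/seteqP; split => w [Xw Gw]; split => //=.
- by apply: (xi_xi_windows N_gt0 T_gt0 Gw bN cT); rewrite Xw addnS.
- by rewrite (xi_windows_xi N_gt0 T_gt0 bN cT Xw) addnS.
Qed.

End polling_law.

Theorem lemma1 (d : measure_display) (Omega : measurableType d) (R : realType)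
  (P : probability Omega R) (N Tpoll : nat) (p : R)
  (tau : nat -> Omega -> nat)
  (hN : (1 <= N)%N) (hT : (1 <= Tpoll)%N) (hp : 0 < p <= 1)
  (hmeas : forall j, (1 <= j <= N)%N -> measurable_fun setT (tau j))
  (hind : mutually_independent P N tau)
  (hgeo : forall j, (1 <= j <= N)%N -> forall t : nat,
            P [set w | (t < tau j w)%N] = ((1 - p) ^+ t)%:E) :
  forall A : set nat,
    P ((fun w => xi N Tpoll (fun j => tau j w)) @^-1` A) = P (tau 1%N @^-1` A).
Proof.
move=> A; have tau1 : (1 <= 1 <= N)%N by rewrite hN.
have mtau1 := measurable_tau_preimage hmeas tau1.
rewrite (measure_preimage_nat _ _ (measurable_xi_tau hN hT hmeas)).
rewrite (measure_preimage_nat _ _ mtau1); apply: eq_eseriesr => -[|s] _.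
- by rewrite /= (geometric_pmf0 mtau1 (hgeo 1%N tau1)) (xi_tau_pmf0 hN hT hmeas hind hgeo).
- by rewrite /= (geometric_pmfS mtau1 (hgeo 1%N tau1)) (xi_tau_pmfS hN hT hmeas hind hgeo).
Qed.
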